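(* Let $f$ satisfy conditions (1) and (2a), let $a,p>0$ and $x,y\in\mathbb{R}$. In the expression \[ a\,e^{-p(x^2+y^2)}\int_0^\infty\!\!\int_0^{2\pi} f(r')\,e^{-pr'^2}\sum_{n=0}^\infty(2p)^n\sum_{i=0}^n\frac{x^{n-i}y^i}{(n-i)!\,i!}\,r'^n\cos^{n-i}\varphi'\sin^i\varphi'\;r'\,d\varphi'\,dr' \] the order of summation and integration may be reversed, for arbitrary values of $p$ and $r=\sqrt{x^2+y^2}$.
   Context: $f:[0,\infty)\to\mathbb{R}$; $c_n=2\pi\int_0^\infty f(r)\,r^{n+1}dr$. Condition (1): there is a constant $F$ with $0\le f(r)\le F$ for all $r\ge0$, $c_0$ exists and $c_0>0$. Condition (2a): $c_{2n}$ exists for all $n\in\mathbb{N}_0$ and $c_n^{1/n}=o(n)$ as $n\to\infty$. *)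

From HB Require Import structures.
From mathcomp Require Import all_boot all_order all_algebra.
From mathcomp Require Import all_classical all_reals all_analysis.
Set Implicit Arguments. Unset Strict Implicit. Unset Printing Implicit Defensive.
Import Order.TTheory GRing.Theory Num.Theory numFieldNormedType.Exports.
Local Open Scope classical_set_scope.
Local Open Scope ring_scope.

Section defs.
Context {R : realType}.

Definition halfline : set R := `[0%R, +oo[%classic.

Definition cmom (f : R -> R) (n : nat) : R :=
  2 * pi * Rintegral lebesgue_measure halfline (fun r => f r * r ^+ n.+1).

Definition cond1 (f : R -> R) : Prop :=
  (exists F : R, forall r, 0 <= r -> 0 <= f r <= F) /\
  lebesgue_measure.-integrable halfline (fun r => (f r * r ^+ 1)%:E) /\
  0 < cmom f 0.

Definition cond2a (f : R -> R) : Prop :=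
  (forall n : nat,
     lebesgue_measure.-integrable halfline (fun r => (f r * r ^+ (2 * n).+1)%:E)) /\
  (fun n : nat => cmom f n `^ (n%:R^-1) / n%:R) @ \oo --> (0 : R).

Definition dom : set (R * R) := halfline `*` `[0%R, 2 * pi]%classic.

Definition leb2 := (@lebesgue_measure R \x @lebesgue_measure R)%E.

(* n-th summand of the integrand (including the Jacobian factor r') *)
Definition term (f : R -> R) (p x y : R) (n : nat) (z : R * R) : R :=
  f z.1 * expR (- p * z.1 ^+ 2) *
  ((2 * p) ^+ n *
   \sum_(i < n.+1) (x ^+ (n - i) * y ^+ i / ((n - i)`!%:R * i`!%:R)
                    * z.1 ^+ n * cos z.2 ^+ (n - i) * sin z.2 ^+ i))
  * z.1.

End defs.

From HB Require Import structures.
From mathcomp Require Import all_boot all_order all_algebra.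
From mathcomp Require Import all_classical all_reals all_analysis.
From mathcomp Require Import ring measurable_realfun.
Set Implicit Arguments.
Unset Strict Implicit.
Unset Printing Implicit Defensive.
Import Order.TTheory GRing.Theory Num.Theory numFieldNormedType.Exports.
Local Open Scope classical_set_scope.
Local Open Scope ring_scope.

(* By the binomial theorem and |cos|, |sin| <= 1, the n-th summand at (r', phi') is bounded
   by f(r') r' e^(-p r'^2) (2 p r' s)^n / n! with s = |x| + |y|.  Hence every partial sum is
   bounded by f(r') r' e^(-p r'^2 + 2 p r' s) <= f(r') r' e^(p s^2), which is integrable on
   [0, oo) x [0, 2 pi] by condition (1), and dominated convergence allows the interchange. *)

Lemma exprDn_fact (R : numFieldType) (u v : R) n :
  \sum_(i < n.+1) u ^+ (n - i) * v ^+ i / ((n - i)`!%:R * i`!%:R) =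
  (u + v) ^+ n / n`!%:R.
Proof.
rewrite exprDn mulr_suml; apply: eq_bigr => i _.
have /(congr1 (fun k => k%:R : R)) := bin_fact (ltnSE (ltn_ord i)).
rewrite !natrM => <-.
have fact_neq0 k : (k`!%:R : R) != 0 by rewrite pnatr_eq0 -lt0n fact_gt0.
have bin_neq0 : ('C(n, i)%:R : R) != 0 by rewrite pnatr_eq0 -lt0n bin_gt0 -ltnS.
by rewrite -mulr_natr; field; rewrite !fact_neq0 bin_neq0.
Qed.

Lemma expR_gaussian_shift_le (R : realType) (p r s : R) : 0 <= p ->
  expR (- p * r ^+ 2) * expR (2 * p * r * s) <= expR (p * s ^+ 2).
Proof.
move=> p0; rewrite -expRD ler_expR -subr_ge0.
have -> : p * s ^+ 2 - (- p * r ^+ 2 + 2 * p * r * s) = p * (r - s) ^+ 2 by ring.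
by rewrite mulr_ge0 ?sqr_ge0.
Qed.

Section exp_coeff_domination.
Variables (R : realType) (u : R ^nat) (A t : R).
Hypotheses (t0 : 0 <= t) (u_le : forall n, `|u n| <= A * exp_coeff t n).

Let A0 : 0 <= A.
Proof.
by have := u_le 0; rewrite /exp_coeff /= expr0 fact0 divr1 mulr1; apply: le_trans.
Qed.

Lemma exp_coeff_dominated_cvg : cvgn (series u).
Proof.
apply: normed_cvg; apply: (series_le_cvg _ _ u_le).
- by move=> n; rewrite /= normr_ge0.
- by move=> n; rewrite mulr_ge0 ?exp_coeff_ge0.
- by apply: is_cvg_seriesZ; exact: is_cvg_series_exp_coeff.
Qed.

Lemma exp_coeff_dominated_series_le N : `|series u N| <= A * expR t.
Proof.
rewrite /series /= (le_trans (ler_norm_sum _ _ _)) //.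
rewrite (le_trans (ler_sum _ (fun n _ => u_le n))) // -mulr_sumr ler_wpM2l //.
apply: (nondecreasing_cvgn_le _ (is_cvg_series_exp_coeff t)).
by apply: nondecreasing_series => n _ _; exact: exp_coeff_ge0.
Qed.

End exp_coeff_domination.

Lemma norm_trig_binomial_sum_le (R : realType) (x y r t : R) n : 0 <= r ->
  `|\sum_(i < n.+1) (x ^+ (n - i) * y ^+ i / ((n - i)`!%:R * i`!%:R)
                     * r ^+ n * cos t ^+ (n - i) * sin t ^+ i)|
  <= exp_coeff (r * (`|x| + `|y|)) n.
Proof.
move=> r0; rewrite /exp_coeff /= exprMn -mulrA -exprDn_fact mulr_sumr.
apply: (le_trans (ler_norm_sum _ _ _)); apply: ler_sum => i _.
have fact_gt0 : 0 < (n - i)`!%:R * i`!%:R :> R by rewrite mulr_gt0 ?ltr0n ?fact_gt0.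
rewrite !normrM !normrX normfV (gtr0_norm fact_gt0) (ger0_norm r0).
have trig_le1 : `|cos t| ^+ (n - i) * `|sin t| ^+ i <= 1.
  by rewrite mulr_ile1 ?exprn_ge0 ?exprn_ile1 ?cos_max ?sin_max.
rewrite -mulrA [X in X * _]mulrC ler_piMr //.
by rewrite !mulr_ge0 ?exprn_ge0 ?invr_ge0 // ltW.
Qed.

Section term_series.
Variables (R : realType) (f : R -> R) (p x y : R) (z : R * R).
Hypotheses (r0 : 0 <= z.1) (f0 : 0 <= f z.1) (p0 : 0 <= p).

Lemma norm_term_le n :
  `|term f p x y n z|
  <= f z.1 * z.1 * expR (- p * z.1 ^+ 2) * exp_coeff (2 * p * z.1 * (`|x| + `|y|)) n.
Proof.
rewrite /term; set S := \sum_(i < n.+1) _.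
have -> : f z.1 * expR (- p * z.1 ^+ 2) * ((2 * p) ^+ n * S) * z.1 =
          f z.1 * z.1 * expR (- p * z.1 ^+ 2) * ((2 * p) ^+ n * S) by ring.
have dens0 : 0 <= f z.1 * z.1 * expR (- p * z.1 ^+ 2) by rewrite !mulr_ge0 ?expR_ge0.
rewrite normrM (ger0_norm dens0) ler_wpM2l // normrM normrX ger0_norm ?mulr_ge0 //.
rewrite -(mulrA (2 * p)) /exp_coeff /= [in leRHS]exprMn -mulrA.
rewrite ler_wpM2l ?exprn_ge0 ?mulr_ge0 //.
exact: norm_trig_binomial_sum_le.
Qed.

Let t0 : 0 <= 2 * p * z.1 * (`|x| + `|y|).
Proof. by rewrite !mulr_ge0 ?addr_ge0. Qed.

Lemma cvg_series_term : cvgn (series (fun n => term f p x y n z)).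
Proof. exact: exp_coeff_dominated_cvg t0 norm_term_le. Qed.

Lemma norm_series_term_le N :
  `|series (fun n => term f p x y n z) N| <= f z.1 * z.1 * expR (p * (`|x| + `|y|) ^+ 2).
Proof.
apply: le_trans (exp_coeff_dominated_series_le t0 norm_term_le N) _.
by rewrite -mulrA ler_wpM2l ?mulr_ge0 // expR_gaussian_shift_le.
Qed.

End term_series.

Lemma measurable_fun_fst_setX d1 d2 d3 (T1 : measurableType d1)
    (T2 : measurableType d2) (T3 : measurableType d3)
    (A : set T1) (B : set T2) (g : T1 -> T3) :
  measurable A -> measurable B -> measurable_fun A g ->
  measurable_fun (A `*` B) (g \o fst).
Proof.
move=> mA mB mg _ Y mY.
have -> : A `*` B `&` (g \o fst) @^-1` Y = (A `&` g @^-1` Y) `*` B.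
  by apply/seteqP; split=> -[u v] [[]].
exact: measurableX (mg mA Y mY) mB.
Qed.

Section integrable_fst_setX.
Local Open Scope ereal_scope.
Context d1 d2 (T1 : measurableType d1) (T2 : measurableType d2) (R : realType).
Variables (m1 : {sigma_finite_measure set T1 -> \bar R})
          (m2 : {sigma_finite_measure set T2 -> \bar R}).
Variables (A : set T1) (B : set T2) (g : T1 -> \bar R).
Hypotheses (mA : measurable A) (mB : measurable B) (m2B : m2 B < +oo).

Lemma integrable_fst_setX :
  m1.-integrable A g -> (m1 \x m2).-integrable (A `*` B) (g \o fst).
Proof.
move=> ig; have mAB := measurableX mA mB.
have mg : measurable_fun (A `*` B) (g \o fst).
  by apply: measurable_fun_fst_setX => //; exact: measurable_int ig.
apply/(integrable_mkcond _ mAB)/integrable12ltyP; first exact/(measurable_restrictT _ mAB).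
have inner x :
    \int[m2]_y `|((g \o fst) \_ (A `*` B)) (x, y)| = ((abse \o g) \_ A) x * m2 B.
  rewrite patchE; case: ifPn => xA.
    rewrite -(integral_cst _ mB) integral_mkcond; apply: eq_integral => y _.
    by rewrite !patchE in_setX xA /=; case: (y \in B) => //=; rewrite normr0.
  rewrite -[point]/(0 : \bar R) mul0e; apply: integral0_eq => y _.
  by rewrite patchE in_setX (negbTE xA) /= normr0.
under eq_integral do rewrite inner.
rewrite ge0_integralZr //; first last.
- by move=> x _; rewrite patchE; case: ifP => _ //=; rewrite abse_ge0.
- apply/(measurable_restrictT _ mA)/measurableT_comp => //; exact: measurable_int ig.
have int_ge0 : 0 <= \int[m1]_(x in A) `|g x| by apply: integral_ge0.
rewrite -integral_mkcond lte_mul_pinfty // ge0_fin_numE //.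
by case/integrableP: ig.
Qed.

End integrable_fst_setX.

Section integral_series.
Context d (T : measurableType d) (R : realType).
Variables (mu : {measure set T -> \bar R}) (D : set T) (mD : measurable D).
Variables (u : (T -> R) ^nat) (G : T -> R).
Hypotheses (mu_ : forall n, measurable_fun D (u n))
           (iG : mu.-integrable D (EFin \o G))
           (series_le : forall z N, D z -> `|series (u ^~ z) N| <= G z)
           (cvg_series : forall z, D z -> cvgn (series (u ^~ z))).

Let measurable_partial_sum N : measurable_fun D (fun z => series (u ^~ z) N).
Proof. exact: measurable_sum. Qed.

Let integrable_partial_sum N : mu.-integrable D (EFin \o (fun z => series (u ^~ z) N)).
Proof.
apply: (le_integrable mD _ _ iG) => [|z Dz]; first exact/measurable_EFinP.
by rewrite lee_fin (le_trans (series_le N Dz)) ?ler_norm.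
Qed.

Lemma integrable_series_term n : mu.-integrable D (EFin \o u n).
Proof.
have := integrableB mD (integrable_partial_sum n.+1) (integrable_partial_sum n).
apply: eq_integrable mD _ _ _.
by move=> z _; rewrite /= -EFinB seriesSB.
Qed.

Lemma Rintegral_series N :
  series (fun n => Rintegral mu D (u n)) N = Rintegral mu D (fun z => series (u ^~ z) N).
Proof.
apply/EFin_inj; rewrite fineK; last first.
  by apply: integrable_fin_num => //; exact: integrable_partial_sum.
rewrite /series /= EFin_sum_fine => [|k _]; last first.
  by apply: integrable_fin_num => //; exact: integrable_series_term.
under [RHS]eq_integral do rewrite -sumEFin.
by rewrite integral_sum //; exact: integrable_series_term.
Qed.

Let lim_series z := limn (series (u ^~ z)).

Let dominated_series :
  mu.-integrable D (EFin \o lim_series) /\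
  (fun N => \int[mu]_(z in D) (series (u ^~ z) N)%:E)%E @ \oo
    --> (\int[mu]_(z in D) (lim_series z)%:E)%E.
Proof.
have [] // := @dominated_convergence _ _ _ mu _ mD
  (fun N z => (series (u ^~ z) N)%:E) (EFin \o lim_series) _ _ _ _ iG.
- by move=> N; exact/measurable_EFinP.
- exact/measurable_EFinP/(measurable_fun_cvg measurable_partial_sum cvg_series).
- apply: aeW => z Dz; apply/cvg_EFin; [exact: nearW | exact: cvg_series].
- by apply: aeW => z N Dz; rewrite abse_EFin lee_fin series_le.
Qed.

Lemma integrable_series_lim : mu.-integrable D (EFin \o lim_series).
Proof. by case: dominated_series. Qed.

Lemma cvg_series_Rintegral :
  series (fun n => Rintegral mu D (u n)) @ \oo --> Rintegral mu D lim_series.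
Proof.
have [ilim] := dominated_series.
rewrite -(fineK (integrable_fin_num mD ilim)) => cvg_int.
rewrite (funext Rintegral_series); exact: fine_cvg cvg_int.
Qed.

End integral_series.

Section term_measurability.
Variable R : realType.
Implicit Types (f : R -> R) (p x y : R).

Definition term_kernel p x y n (z : R * R) : R :=
  expR (- p * z.1 ^+ 2) *
  ((2 * p) ^+ n *
   \sum_(i < n.+1) (x ^+ (n - i) * y ^+ i / ((n - i)`!%:R * i`!%:R)
                    * z.1 ^+ n * cos z.2 ^+ (n - i) * sin z.2 ^+ i)).

Lemma termE f p x y n z : term f p x y n z = f z.1 * z.1 * term_kernel p x y n z.
Proof. by rewrite /term /term_kernel; ring. Qed.

Lemma measurable_term_kernel p x y n : measurable_fun setT (term_kernel p x y n).
Proof.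
have mfst k : measurable_fun setT (fun z : R * R => z.1 ^+ k).
  exact: measurable_funX measurable_fst.
have mtrig (h : R -> R) k : continuous h -> measurable_fun setT (fun z : R * R => h z.2 ^+ k).
  move=> ch; apply: measurable_funX; apply: measurableT_comp measurable_snd.
  exact: continuous_measurable_fun.
apply: measurable_funM.
  by apply: measurableT_comp; [exact: measurable_expR | exact: measurable_funM].
apply: measurable_funM => //; apply: measurable_sum => i.
by repeat apply: measurable_funM => //; apply: mtrig;
  [exact: continuous_cos | exact: continuous_sin].
Qed.

Lemma cond1_dom_ge0 f (z : R * R) : cond1 f -> dom z -> 0 <= z.1 /\ 0 <= f z.1.
Proof.
move=> [[F f_bnd] _] [/=]; rewrite /halfline /= in_itv /= andbT => r0 _.
by split => //; case/andP: (f_bnd _ r0).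
Qed.

(* [leb2] is defined on [measurableTypeR R], a copy of [R] whose sigma-algebra carries a
   different display, so sets and functions on it are typed explicitly below. *)
Let mhalfline : measurable (halfline : set (measurableTypeR R)).
Proof. exact: measurable_itv. Qed.

Let mphi : measurable (`[0, 2 * pi]%classic : set (measurableTypeR R)).
Proof. exact: measurable_itv. Qed.

Lemma measurable_dom : measurable (dom : set (measurableTypeR R * measurableTypeR R)).
Proof. exact: measurableX mhalfline mphi. Qed.

Lemma measurable_term f p x y n : cond1 f ->
  measurable_fun (dom : set (measurableTypeR R * measurableTypeR R)) (term f p x y n).
Proof.
move=> [_ [/measurable_int/measurable_EFinP mf _]].
have mterm : measurable_fun dom (term f p x y n).
  rewrite (funext (termE f p x y n)); apply: measurable_funM.
    by apply: (measurable_fun_fst_setX (g := fun r => f r * r)) => //; exact: measurable_itv.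
  exact: measurable_funS (measurable_term_kernel p x y n).
exact: mterm.
Qed.

Lemma integrable_density_dom f (c : R) : cond1 f ->
  leb2.-integrable dom (fun z => (f z.1 * z.1 * c)%:E).
Proof.
move=> [_ [if1 _]].
have ifc : lebesgue_measure.-integrable halfline (fun r => (f r * r * c)%:E).
  apply: (eq_integrable mhalfline _ _ _ (integrableZr mhalfline c if1)).
  by move=> r _; rewrite /= EFinM.
apply: (integrable_fst_setX mhalfline mphi _ ifc).
by rewrite /= lebesgue_measure_itv /= lte_fin mulr_gt0 ?pi_gt0 // -EFinD ltry.
Qed.

End term_measurability.

Theorem lemma5 (R : realType) (f : R -> R) (a p x y : R) :
  cond1 f -> cond2a f -> 0 < a -> 0 < p ->
  (forall n : nat, leb2.-integrable dom (fun z => (term f p x y n z)%:E)) /\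
  (forall z, dom z -> cvgn (series (fun n => term f p x y n z))) /\
  leb2.-integrable dom (fun z => (limn (series (fun n => term f p x y n z)))%:E) /\
  series (fun n => a * expR (- p * (x ^+ 2 + y ^+ 2)) *
                   Rintegral leb2 dom (term f p x y n)) @ \oo -->
    a * expR (- p * (x ^+ 2 + y ^+ 2)) *
    Rintegral leb2 dom (fun z => limn (series (fun n => term f p x y n z))).
Proof.
move=> c1 _ _ /ltW p0.
have series_le (z : measurableTypeR R * measurableTypeR R) N : dom z ->
    `|series (fun n => term f p x y n z) N| <= f z.1 * z.1 * expR (p * (`|x| + `|y|) ^+ 2).
  by move=> /(cond1_dom_ge0 c1) [r0 f0]; exact: norm_series_term_le.
have cvg_term (z : measurableTypeR R * measurableTypeR R) : dom z ->
    cvgn (series (fun n => term f p x y n z)).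
  by move=> /(cond1_dom_ge0 c1) [r0 f0]; exact: cvg_series_term.
have mterm n := measurable_term p x y n c1.
have iG := integrable_density_dom (expR (p * (`|x| + `|y|) ^+ 2)) c1.
have mdom := @measurable_dom R.
split; first by move=> n; apply: (integrable_series_term mdom mterm iG); exact: series_le.
split; first exact: cvg_term.
split.
  by apply: (integrable_series_lim mdom mterm iG); [exact: series_le | exact: cvg_term].
set K := a * _.
rewrite (_ : series _ = fun N => K * series (fun n => Rintegral leb2 dom (term f p x y n)) N).
  apply: cvgMr; apply: (cvg_series_Rintegral mdom mterm iG).
  - exact: series_le.
  - exact: cvg_term.
by apply/funext => N; rewrite /series /= mulr_sumr.
Qed.
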